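(* Assume $n>3t+2d$. In any execution of Algorithm 1, if a correct process mbrb-delivers an app-message $m$ from $p_j$ with sequence number $sn$, then at least $\ell=c-d$ correct processes mbrb-deliver $m$ from $p_j$ with sequence number $sn$.
   Context: System model. There are $n$ asynchronous processes $p_1,\dots,p_n$ with distinct known identities. Up to $t$ are Byzantine (arbitrary behavior); the rest are correct; $c$ is the number of correct processes in the execution, $n-t\le c\le n$. The network is fully connected, asynchronous, never corrupts/duplicates/creates messages; ''broadcast $M$'' sends $M$ to all $n$ processes; a message adversary may suppress, per broadcast by a correct process, up to $d$ ($0\le d<c$) copies addressed to correct processes, all other copies among correct processes being eventually received. Signatures are unforgeable and public keys are known. Algorithm 1 (code for $p_i$). Each process stores, for each triplet $(m,sn,j)$, a set of saved valid signatures of that triplet, at most one per signer. On $\mathrm{mbrb\_broadcast}(m,sn)$: $p_i$ saves its own signature of $(m,sn,i)$ and broadcasts $\mathrm{BUNDLE}(m,sn,i,S)$, $S$ the saved signatures for $(m,sn,i)$. On receiving $\mathrm{BUNDLE}(m,sn,j,sigs)$: if $p_i$ has not already mbrb-delivered some $(-,sn,j)$ and $sigs$ contains a valid signature of $(m,sn,j)$ by $p_j$, then: (1) save all new valid signatures of $(m,sn,j)$ in $sigs$; (2) if $p_i$ has not yet signed any $(-,sn,j)$, save its own signature of $(m,sn,j)$ and broadcast $\mathrm{BUNDLE}(m,sn,j,\text{all saved signatures for }(m,sn,j))$; (3) if strictly more than $\frac{n+t}{2}$ signatures for $(m,sn,j)$ are saved, broadcast $\mathrm{BUNDLE}(m,sn,j,\text{all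 saved signatures})$ and mbrb-deliver $(m,sn,j)$. *)

From mathcomp Require Import all_boot.
Set Implicit Arguments.
Unset Strict Implicit.
Unset Printing Implicit Defensive.

Section MBRB.
Variable M : eqType.     (* application messages *)
Variable n : nat.

(* a triplet (m, sn, j) *)
Definition triple := (M * nat * 'I_n)%type.
(* A signature is modelled symbolically: (signer, signed triplet).
   A signature g is a valid signature of x by k iff g = (k, x). *)
Definition sig := ('I_n * triple)%type.

Inductive msg := BUNDLE (m : M) (sn : nat) (j : 'I_n) (sigs : seq sig).

Definition bsigs (b : msg) : seq sig := let: BUNDLE _ _ _ s := b in s.

Record lstate := Lstate {
  saved : seq sig;          (* saved valid signatures (at most one per signer and triplet) *)
  signed : seq triple;
  delivered : seq triple
}.

Definition init_state : lstate := Lstate [::] [::] [::].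

Definition sigs_for (s : seq sig) (x : triple) : seq sig := [seq g <- s | g.2 == x].

Definition same_slot (sn : nat) (j : 'I_n) (y : triple) : bool :=
  (y.1.2 == sn) && (y.2 == j).

Definition add_sig (s : seq sig) (g : sig) : seq sig :=
  if g \in s then s else rcons s g.

(* handler of mbrb_broadcast(m, sn) at p_i: new state, broadcast messages *)
Definition on_invoke (i : 'I_n) (st : lstate) (m : M) (sn : nat) : lstate * seq msg :=
  let x : triple := (m, sn, i) in
  let sv := add_sig (saved st) (i, x) in
  (Lstate sv (rcons (signed st) x) (delivered st), [:: BUNDLE m sn i (sigs_for sv x)]).

Variable t : nat.

Definition on_receive (i : 'I_n) (st : lstate) (b : msg) : lstate * seq msg :=
  let: BUNDLE m sn j sigs := b in
  let x : triple := (m, sn, j) in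
  if ~~ has (same_slot sn j) (delivered st) && ((j, x) \in sigs) then
    (* (1) save all new valid signatures of x *)
    let sv1 := saved st ++ undup [seq g <- sigs | (g.2 == x) && (g \notin saved st)] in
    (* (2) sign and forward if not yet signed some (-, sn, j) *)
    let '(sv2, sg2, out2) :=
      if ~~ has (same_slot sn j) (signed st) then
        let sv2 := add_sig sv1 (i, x) in
        (sv2, rcons (signed st) x, [:: BUNDLE m sn j (sigs_for sv2 x)])
      else (sv1, signed st, [::]) in
    (* (3) strictly more than (n+t)/2 signatures: broadcast and deliver *)
    if n + t < (size (sigs_for sv2 x)) * 2 then
      (Lstate sv2 sg2 (rcons (delivered st) x),
       out2 ++ [:: BUNDLE m sn j (sigs_for sv2 x)])
    else (Lstate sv2 sg2 (delivered st), out2)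
  else (st, [::]).

(* Global events of an execution (one per time step). *)
Inductive event :=
| Skip
| Invoke (i : 'I_n) (m : M) (sn : nat)
| ByzSend (b dest : 'I_n) (mm : msg)
| Recv (i : 'I_n) (tau k : nat).                     (* p_i receives its copy of the k-th
                                                        message sent at time tau *)

Variable C : {set 'I_n}.      (* correct processes *)
Variable ev : nat -> event.

(* content of the copy addressed to dest of the k-th message sent at time tau0,
   given the broadcasts outs of the correct steps so far *)
Definition copy_msg (outs : seq (seq msg)) (tau0 k : nat) (dest : 'I_n) : option msg :=
  if tau0 < size outs then
    match ev tau0 with
    | ByzSend _ d0 mm => if (k == 0) && (d0 == dest) then Some mm else None
    | _ => onth (nth [::] outs tau0) k
    end
  else None.

Definition upd (st : 'I_n -> lstate) (i : 'I_n) (s : lstate) : 'I_n -> lstate :=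
  fun p => if p == i then s else st p.

(* run tau = (messages broadcast at steps 0..tau-1, local states at time tau) *)
Fixpoint run (tau : nat) : seq (seq msg) * ('I_n -> lstate) :=
  match tau with
  | 0 => ([::], fun _ => init_state)
  | tau'.+1 =>
    let: (outs, st) := run tau' in
    match ev tau' with
    | Invoke i m sn =>
        if i \in C then
          let: (s', o) := on_invoke i (st i) m sn in (rcons outs o, upd st i s')
        else (rcons outs [::], st)
    | Recv i tau0 k =>
        match copy_msg outs tau0 k i with
        | Some mm =>
            if i \in C then
              let: (s', o) := on_receive i (st i) mm in (rcons outs o, upd st i s')
            else (rcons outs [::], st)
        | None => (rcons outs [::], st)
        end
    | _ => (rcons outs [::], st)
    end
  end.

Definition stateAt (tau : nat) (i : 'I_n) : lstate := (run tau).2 i.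
(* messages broadcast (by a correct process) at step tau *)
Definition outsAt (tau : nat) : seq msg := nth [::] (run tau.+1).1 tau.

Definition mbrb_delivers (i : 'I_n) (x : triple) : Prop :=
  exists tau, x \in delivered (stateAt tau i).

Variable d : nat.

Definition valid_exec : Prop :=
  [/\
      #|~: C| <= t /\ d < #|C|,
      (* Byzantine sends: only by Byzantine processes; unforgeability: a signature
         by a correct p_k of x can only be used if p_k signed x earlier *)
      (forall tau b dest mm, ev tau = ByzSend b dest mm ->
         b \notin C /\
         forall k x, (k, x) \in bsigs mm -> k \in C -> x \in signed (stateAt tau k)),
      (forall tau i m sn, ev tau = Invoke i m sn ->
         i \in C /\ forall tau' m', ev tau' = Invoke i m' sn -> tau' = tau),
      (forall tau i tau0 k, ev tau = Recv i tau0 k ->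
         [/\ i \in C, tau0 < tau, copy_msg (run tau).1 tau0 k i <> None &
             forall tau', ev tau' = Recv i tau0 k -> tau' = tau]) &
      (* message adversary: for each broadcast by a correct process, at most d
         copies to correct processes are suppressed, all others are received *)
      (forall tau0 k, k < size (outsAt tau0) ->
         exists D : {set 'I_n}, #|D| <= d /\
           forall i, i \in C -> i \notin D -> exists tau, ev tau = Recv i tau0 k)].

End MBRB.

From mathcomp Require Import all_boot zify.
Set Implicit Arguments.
Unset Strict Implicit.
Unset Printing Implicit Defensive.

(* A correct process delivers (m, sn, j) only once it has saved signatures of that
   triplet from more than (n + t)/2 processes, and it then broadcasts all of them in
   one bundle. The message adversary withholds that bundle from at most d correct
   processes, so at least c - d of them receive it. A receiver that has delivered
   nothing for the slot (sn, j) accepts the bundle and reaches the same quorum.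
   A receiver that has already delivered some (m', sn, j) held a quorum for it;
   two such quorums share a correct signer, and a correct process signs at most
   one triplet per slot, so m' = m. Unforgeability enters through the invariant
   that every signature of a correct process that is saved or sent was really
   produced by that process. *)

Section Handlers.
Variables (M : eqType) (n t : nat).
Implicit Types (s : lstate M n) (sv : seq (sig M n)) (x : triple M n).

Definition quorum sv x := n + t < size (sigs_for sv x) * 2.

Definition bundle x sv : msg M n := BUNDLE x.1.1 x.1.2 x.2 (sigs_for sv x).

Lemma quorum_prefix sv sv' x : prefix sv sv' -> quorum sv x -> quorum sv' x.
Proof.
case/prefixP=> e ->; rewrite /quorum /sigs_for filter_cat size_cat => q.
by apply: leq_trans q _; rewrite leq_mul2r leq_addr orbT.
Qed.

Lemma bsigs_bundle x sv : {subset bsigs (bundle x sv) <= sv}.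
Proof. by move=> g; rewrite mem_filter => /andP[]. Qed.

Lemma mem_add_sig sv g g' : (g' \in add_sig sv g) = (g' == g) || (g' \in sv).
Proof.
rewrite /add_sig; case: ifP => [gs|_]; last by rewrite mem_rcons in_cons.
by case: eqP => // ->.
Qed.

Lemma prefix_add_sig sv g : prefix sv (add_sig sv g).
Proof. by rewrite /add_sig; case: ifP => _; rewrite ?prefix_refl ?prefix_rcons. Qed.

Lemma add_sig_uniq sv g : uniq sv -> uniq (add_sig sv g).
Proof. by rewrite /add_sig; case: ifP => // gs; rewrite rcons_uniq gs. Qed.

Definition state_le s s' :=
  [/\ prefix (saved s) (saved s'), {subset signed s <= signed s'}
    & {subset delivered s <= delivered s'}].

Lemma state_le_refl s : state_le s s.
Proof. by split; rewrite ?prefix_refl. Qed.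

Lemma state_le_trans s1 s2 s3 : state_le s1 s2 -> state_le s2 s3 -> state_le s1 s3.
Proof.
case=> sv12 sg12 dl12 [sv23 sg23 dl23].
by split; [exact: prefix_trans sv23 | move=> y /sg12 /sg23 | move=> y /dl12 /dl23].
Qed.

Definition slot_unique (ys : seq (triple M n)) :=
  {in ys &, forall y y', same_slot y.1.2 y.2 y' -> y = y'}.

Lemma same_slot_sym x x' : same_slot x.1.2 x.2 x' = same_slot x'.1.2 x'.2 x.
Proof. by rewrite /same_slot eq_sym [x.2 == _]eq_sym. Qed.

Lemma slot_unique_rcons ys y : slot_unique ys -> ~~ has (same_slot y.1.2 y.2) ys ->
  slot_unique (rcons ys y).
Proof.
move=> uniq_ys fresh y1 y2; rewrite !mem_rcons !in_cons.
case/orP=> [/eqP-> | y1s] /orP[/eqP-> | y2s] // slot.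
- by case/hasP: fresh; exists y2.
- by case/hasP: fresh; exists y1; rewrite // same_slot_sym.
- exact: uniq_ys.
Qed.

Lemma card_signers sv x : uniq sv -> #|[set k | (k, x) \in sv]| = size (sigs_for sv x).
Proof.
move=> u; have u_signers : uniq (map fst (sigs_for sv x)).
  rewrite map_inj_in_uniq ?filter_uniq // => -[k1 x1] [k2 x2].
  by rewrite !mem_filter /= => /andP[/eqP-> _] /andP[/eqP-> _] ->.
rewrite -(size_map fst) -(card_uniqP u_signers); apply: eq_card => k.
rewrite inE; apply/idP/mapP => [kx | [[k' x'] + /= ->]].
  by exists (k, x); rewrite // mem_filter eqxx.
by rewrite mem_filter => /andP[/eqP /= ->].
Qed.

Lemma mem_cat_fresh_sigs sv sigs x g :
  (g \in sv ++ undup [seq g <- sigs | (g.2 == x) && (g \notin sv)]) =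
  (g \in sv) || (g.2 == x) && (g \in sigs).
Proof. by rewrite mem_cat mem_undup mem_filter; case: (g \in sv); rewrite ?andbT. Qed.

Lemma cat_fresh_sigs_uniq sv sigs x : uniq sv ->
  uniq (sv ++ undup [seq g <- sigs | (g.2 == x) && (g \notin sv)]).
Proof.
move=> u; rewrite cat_uniq u undup_uniq andbT; apply/hasPn => g.
by rewrite mem_undup mem_filter => /andP[/andP[_ ->]].
Qed.

Variable i : 'I_n.

Section Invoke.
Variables (s : lstate M n) (m : M) (sn : nat).
Let s' := (on_invoke i s m sn).1.
Let o := (on_invoke i s m sn).2.

Lemma on_invoke_saved_prefix : prefix (saved s) (saved s').
Proof. exact: prefix_add_sig. Qed.

Lemma on_invoke_saved_uniq : uniq (saved s) -> uniq (saved s').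
Proof. exact: add_sig_uniq. Qed.

Lemma mem_on_invoke_saved g :
  g \in saved s' -> g \in saved s \/ g.1 = i /\ g.2 \in signed s'.
Proof.
rewrite mem_add_sig => /orP[/eqP-> | ]; [right | by left].
by rewrite mem_rcons mem_head.
Qed.

Lemma on_invoke_le : state_le s s'.
Proof. by split; [exact: on_invoke_saved_prefix | exact: mem_subseq (subseq_rcons _ _) |]. Qed.

Lemma on_invoke_bundles k mm : onth o k = Some mm -> exists x, mm = bundle x (saved s').
Proof. by case/onth1P=> _ <-; exists (m, sn, i). Qed.

End Invoke.

(* The five outcomes of [on_receive]: accepted, split by whether the receiver signs
   in step (2) and whether it delivers in step (3), and rejected. *)
Ltac receive_cases :=
  case=> m sn j sigs /=; case: ifP => [/andP[nodel src] | _];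
  [case: ifP => fresh; case: ifP => q | ] => /=.

Section Receive.
Variables (s : lstate M n) (b : msg M n).
Let s' := (on_receive t i s b).1.
Let o := (on_receive t i s b).2.

Lemma on_receive_saved_prefix : prefix (saved s) (saved s').
Proof.
rewrite /s'; move: b; receive_cases; rewrite ?prefix_refl ?prefix_prefix //;
exact: prefix_trans (prefix_prefix _ _) (prefix_add_sig _ _).
Qed.

Lemma on_receive_saved_uniq : uniq (saved s) -> uniq (saved s').
Proof.
rewrite /s'; move: b; receive_cases => // u;
by rewrite ?add_sig_uniq ?cat_fresh_sigs_uniq.
Qed.

Lemma mem_on_receive_saved g : g \in saved s' ->
  [\/ g \in saved s, g \in bsigs b | g.1 = i /\ g.2 \in signed s'].
Proof.
rewrite /s'; move: b; receive_cases => G; last by constructor 1.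
all: move: G; rewrite ?mem_add_sig mem_cat_fresh_sigs.
1,2: case/orP=> [/eqP-> | ]; first by constructor 3; rewrite mem_rcons mem_head.
all: by case/orP=> [? | /andP[_ ?]]; [constructor 1 | constructor 2].
Qed.

Lemma on_receive_signed : signed s' = signed s \/
  exists y, [/\ signed s' = rcons (signed s) y,
                ~~ has (same_slot y.1.2 y.2) (signed s) & (y.2, y) \in bsigs b].
Proof.
rewrite /s'; move: b; receive_cases; try by left.
all: by right; exists (m, sn, j).
Qed.

Lemma on_receive_delivered_subset : {subset delivered s <= delivered s'}.
Proof.
by rewrite /s'; move: b; receive_cases => // x dx; rewrite mem_rcons in_cons dx orbT.
Qed.

Lemma on_receive_new_delivery x : x \in delivered s' -> x \notin delivered s ->
  [/\ quorum (saved s') x, (x.2, x) \in saved s' &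
      exists k, onth o k = Some (bundle x (saved s'))].
Proof.
rewrite /s' /o; move: b; receive_cases => dx ndx; try by rewrite dx in ndx.
all: move: dx ndx; rewrite mem_rcons in_cons => /orP[/eqP-> _ | /[swap] /negbTE->] //.
all: split; [exact: q | | by exists 0].
all: by rewrite ?mem_add_sig mem_cat_fresh_sigs eqxx src !orbT.
Qed.

Lemma on_receive_le : state_le s s'.
Proof.
split; [exact: on_receive_saved_prefix | | exact: on_receive_delivered_subset].
by case: on_receive_signed => [-> // | [y [-> _ _]]]; exact: mem_subseq (subseq_rcons _ _).
Qed.

Lemma on_receive_bundles k mm : onth o k = Some mm -> exists x, mm = bundle x (saved s').
Proof.
rewrite /s' /o; move: b; receive_cases; case: k => [|[|k]] //=; rewrite ?onth0n //.
all: by case=> <-; exists (m, sn, j).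
Qed.

End Receive.

Lemma quorum_subset sv sv' x : uniq sv -> {subset sigs_for sv x <= sv'} ->
  quorum sv x -> quorum sv' x.
Proof.
move=> u sub; rewrite /quorum => /leq_trans; apply; rewrite leq_mul2r; apply/orP; right.
apply: uniq_leq_size; first exact: filter_uniq.
by move=> g gx; rewrite mem_filter (sub _ gx) andbT; move: gx; rewrite mem_filter => /andP[].
Qed.

Lemma on_receive_quorum_bundle s x sv : uniq sv -> (x.2, x) \in sv -> quorum sv x ->
  ~~ has (same_slot x.1.2 x.2) (delivered s) ->
  x \in delivered (on_receive t i s (bundle x sv)).1.
Proof.
case: x => [[m sn] j] /= u src q nodel; rewrite /bundle /= nodel mem_filter eqxx src /=.
case: ifP => _; case: ifP => q' /=; rewrite ?mem_rcons ?mem_head //; case/negP: q'.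
all: apply: quorum_subset u _ q => g; rewrite mem_filter => /andP[gx gsv].
all: by rewrite ?mem_add_sig mem_cat_fresh_sigs mem_filter gx gsv !orbT.
Qed.

End Handlers.

Lemma quorums_meet (T : finType) (A B C : {set T}) t :
  #|~: C| <= t -> #|T| + t < #|A| * 2 -> #|T| + t < #|B| * 2 ->
  exists2 k, k \in A :&: B & k \in C.
Proof.
move=> byz qA qB; apply/exists_inP; apply: contraLR qA => /exists_inPn disj.
have sub : A :&: B \subset ~: C by apply/subsetP => k /disj; rewrite inE.
have := subset_leq_card sub; have := cardsUI A B; have := max_card (A :|: B); lia.
Qed.

Lemma exists_switch_on (P : pred nat) tau : ~~ P 0 -> P tau ->
  exists tau1, ~~ P tau1 /\ P tau1.+1.
Proof.
elim: tau => [/negP // | tau IH] P0 Ptau.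
by case: (boolP (P tau)) => [/(IH P0) | nP]; last exists tau.
Qed.

Section Execution.
Variables (M : eqType) (n t d : nat) (C : {set 'I_n}) (ev : nat -> event M n).
Notation RUN := (run t C ev).
Notation ST := (stateAt t C ev).
Notation outs := (outsAt t C ev).

Lemma run_sent_rcons tau : exists o, (RUN tau.+1).1 = rcons (RUN tau).1 o.
Proof.
rewrite /=; case: (RUN tau) => sent st /=.
case: (ev tau) => [|i m sn|b dst mm|i tau0 k]; try by eexists.
  by case: ifP; [case: (on_invoke i (st i) m sn) |]; eexists.
by case: copy_msg => [mm|]; [case: ifP; [case: (on_receive t i (st i) mm) |] |]; eexists.
Qed.

Lemma size_run tau : size (RUN tau).1 = tau.
Proof.
by elim: tau => // tau IH; case: (run_sent_rcons tau) => o ->; rewrite size_rcons IH.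
Qed.

Lemma nth_run_sent tau tau0 : tau0 < tau -> nth [::] (RUN tau).1 tau0 = outs tau0.
Proof.
elim: tau => // tau IH; rewrite ltnS leq_eqVlt => /orP[/eqP-> // | lt].
by case: (run_sent_rcons tau) => o ->; rewrite nth_rcons size_run lt IH.
Qed.

Variant step_spec tau : Prop :=
| StepIdle of ST tau.+1 = ST tau & outs tau = [::]
| StepInvoke i m sn of ev tau = Invoke i m sn & i \in C
    & ST tau.+1 = upd (ST tau) i (on_invoke i (ST tau i) m sn).1
    & outs tau = (on_invoke i (ST tau i) m sn).2
| StepReceive i tau0 k mm of ev tau = Recv M i tau0 k
    & copy_msg ev (RUN tau).1 tau0 k i = Some mm & i \in C
    & ST tau.+1 = upd (ST tau) i (on_receive t i (ST tau i) mm).1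
    & outs tau = (on_receive t i (ST tau i) mm).2.

Lemma stepP tau : step_spec tau.
Proof.
have last_outs o st : RUN tau.+1 = (rcons (RUN tau).1 o, st) -> outs tau = o.
  by rewrite /outsAt => ->; rewrite nth_rcons size_run ltnn eqxx.
have idle : RUN tau.+1 = (rcons (RUN tau).1 [::], (RUN tau).2) -> step_spec tau.
  by move=> R; apply: StepIdle; [rewrite /stateAt R | exact: last_outs R].
case E: (ev tau) => [|i m sn|b dst mm|i tau0 k].
- by apply: idle; rewrite /= E; case: (RUN tau).
- case iC: (i \in C); last by apply: idle; rewrite /= E iC; case: (RUN tau).
  have R : RUN tau.+1 = (rcons (RUN tau).1 (on_invoke i (ST tau i) m sn).2,
                         upd (ST tau) i (on_invoke i (ST tau i) m sn).1).
    rewrite /= /stateAt E iC; case: (RUN tau) => sent st /=.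
    by case: (on_invoke i (st i) m sn).
  by apply: StepInvoke iC _ _; [ | rewrite /stateAt R | exact: last_outs R].
- by apply: idle; rewrite /= E; case: (RUN tau).
- case cp: (copy_msg ev (RUN tau).1 tau0 k i) => [mm|]; last first.
    by apply: idle; move: cp; rewrite /= E; case: (RUN tau) => sent st /= ->.
  case iC: (i \in C); last first.
    by apply: idle; move: cp; rewrite /= E iC; case: (RUN tau) => sent st /= ->.
  have R : RUN tau.+1 = (rcons (RUN tau).1 (on_receive t i (ST tau i) mm).2,
                         upd (ST tau) i (on_receive t i (ST tau i) mm).1).
    move: cp; rewrite /= /stateAt E iC; case: (RUN tau) => sent st /= ->.
    by case: (on_receive t i (st i) mm).
  by apply: StepReceive cp iC _ _; [ | rewrite /stateAt R | exact: last_outs R].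
Qed.

Lemma copy_msgP tau tau0 k i mm : copy_msg ev (RUN tau).1 tau0 k i = Some mm ->
  tau0 < tau /\ ((exists b, ev tau0 = ByzSend b i mm) \/ onth (outs tau0) k = Some mm).
Proof.
rewrite /copy_msg size_run; case: ifP => // lt; rewrite nth_run_sent // => cp.
split=> //; move: cp; case: (ev tau0) => [|? ? ?|b dst mm'|? ? ?]; try by right.
by case: ifP => // /andP[_ /eqP->] [<-]; left; exists b.
Qed.

Lemma copy_msg_sent tau tau0 k i mm : tau0 < tau -> onth (outs tau0) k = Some mm ->
  copy_msg ev (RUN tau).1 tau0 k i = Some mm.
Proof.
rewrite /copy_msg size_run => lt; rewrite lt nth_run_sent //.
by case: (stepP tau0) => [_ -> | ? ? ? -> | ? ? ? ? ->]; rewrite ?onth0n.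
Qed.

Lemma stateAt_recv tau i tau0 k mm : ev tau = Recv M i tau0 k ->
  copy_msg ev (RUN tau).1 tau0 k i = Some mm -> i \in C ->
  ST tau.+1 i = (on_receive t i (ST tau i) mm).1.
Proof.
rewrite /stateAt /= => -> + iC; rewrite iC; case: (RUN tau) => sent st /= ->.
by case: (on_receive t i (st i) mm) => s' o /=; rewrite /upd eqxx.
Qed.

Lemma stateAt_le tau tau' p : tau <= tau' -> state_le (ST tau p) (ST tau' p).
Proof.
elim: tau' => [|tau' IH]; first by rewrite leqn0 => /eqP->; exact: state_le_refl.
rewrite leq_eqVlt ltnS => /orP[/eqP-> | /IH le]; first exact: state_le_refl.
apply: state_le_trans le _.
case: (stepP tau') => [-> _ | i m sn _ _ -> _ | i tau0 k mm _ _ _ -> _];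
  first exact: state_le_refl.
all: rewrite /upd; case: eqP => [-> | _]; last exact: state_le_refl.
  exact: on_invoke_le.
exact: on_receive_le.
Qed.

Lemma saved_uniq tau p : uniq (saved (ST tau p)).
Proof.
elim: tau p => [//| tau IH] p.
case: (stepP tau) => [-> _ | i m sn _ _ -> _ | i tau0 k mm _ _ _ -> _]; first exact: IH.
all: rewrite /upd; case: eqP => _; last exact: IH.
  exact: on_invoke_saved_uniq.
exact: on_receive_saved_uniq.
Qed.

Lemma delivered_quorum tau p x :
  x \in delivered (ST tau p) -> quorum t (saved (ST tau p)) x.
Proof.
elim: tau p => [//| tau IH] p.
case: (stepP tau) => [-> _ | i m sn _ _ -> _ | i tau0 k mm _ _ _ -> _]; first exact: IH.
all: rewrite /upd; case: eqP => _; last exact: IH.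
  by move=> /IH; apply: quorum_prefix; exact: on_invoke_saved_prefix.
case old: (x \in delivered (ST tau i)).
  by move=> _; apply: quorum_prefix (IH _ old); exact: on_receive_saved_prefix.
by case/on_receive_new_delivery => //; rewrite old.
Qed.

Lemma sent_bundles tau k mm : onth (outs tau) k = Some mm ->
  exists i x, mm = bundle x (saved (ST tau.+1 i)).
Proof.
case: (stepP tau) => [_ -> | i m sn _ _ -> -> | i tau0 k' mm' _ _ _ -> ->]; rewrite ?onth0n //.
all: move=> sent; exists i; rewrite /upd eqxx.
  exact: on_invoke_bundles sent.
exact: on_receive_bundles sent.
Qed.

Lemma delivery_broadcast tau p x :
  x \notin delivered (ST tau p) -> x \in delivered (ST tau.+1 p) ->
  [/\ quorum t (saved (ST tau.+1 p)) x, (x.2, x) \in saved (ST tau.+1 p)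
    & exists k, onth (outs tau) k = Some (bundle x (saved (ST tau.+1 p)))].
Proof.
case: (stepP tau) => [E _ | i m sn _ _ E _ | i tau0 k mm _ _ _ E outE]; rewrite E /upd.
- by move=> /negP nd /nd.
- by case: eqP => [-> | _] /= /negP nd /nd.
case: eqP => [-> nd dx | _ /negP nd /nd //].
by rewrite outE; exact: on_receive_new_delivery dx nd.
Qed.

Definition genuine tau (g : sig M n) := g.1 \in C -> g.2 \in signed (ST tau g.1).

Lemma genuine_le tau tau' g : tau <= tau' -> genuine tau g -> genuine tau' g.
Proof. by move=> le gen /gen; case: (stateAt_le g.1 le) => _ + _; apply. Qed.

Section ValidExecution.
Hypothesis valid : valid_exec t C ev d.

(* Stated relative to the invariant on saved signatures at earlier times, so that
   [saved_genuine] below can be proved by strong induction. *)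
Lemma copy_genuine tau tau0 k i mm :
  (forall tau' p, tau' <= tau -> {in saved (ST tau' p), forall g, genuine tau' g}) ->
  copy_msg ev (RUN tau).1 tau0 k i = Some mm -> {in bsigs mm, forall g, genuine tau g}.
Proof.
move=> saved_gen /copy_msgP[lt [[b byz] | sent]] g gm.
  case: valid => _ /(_ _ _ _ _ byz) [_ unforge] _ _ _ gC.
  have := unforge g.1 g.2; rewrite -surjective_pairing => /(_ gm gC).
  by case: (stateAt_le g.1 (ltnW lt)) => _ + _; apply.
case: (sent_bundles sent) => p [x mmE]; move: gm; rewrite mmE => /bsigs_bundle gs.
exact: genuine_le lt (saved_gen _ _ lt _ gs).
Qed.

Lemma saved_genuine tau p : {in saved (ST tau p), forall g, genuine tau g}.
Proof.
elim/ltn_ind: tau p => -[//| tau] IH p.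
have prev q g : g \in saved (ST tau q) -> genuine tau.+1 g.
  by move=> gs; apply: genuine_le (leqnSn tau) (IH _ _ _ _ gs).
have own g : g.2 \in signed (ST tau.+1 g.1) -> genuine tau.+1 g by move=> gs _.
case: (stepP tau) => [E _ | i m sn _ _ E _ | i tau0 k mm _ cp _ E _].
- by rewrite E => g /prev.
- rewrite E /upd; case: eqP => _ g; last exact: prev.
  case/mem_on_invoke_saved => [/prev // | [g1 gs]].
  by apply: own; rewrite E /upd g1 eqxx.
- rewrite E /upd; case: eqP => _ g; last exact: prev.
  case/mem_on_receive_saved => [/prev // | gm | [g1 gs]]; last first.
    by apply: own; rewrite E /upd g1 eqxx.
  apply: genuine_le (leqnSn tau) _; apply: copy_genuine cp _ gm => tau' q le.
  exact: IH.
Qed.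

Lemma received_genuine tau tau0 k i mm : copy_msg ev (RUN tau).1 tau0 k i = Some mm ->
  {in bsigs mm, forall g, genuine tau g}.
Proof. by apply: copy_genuine => tau' p _; exact: saved_genuine. Qed.

Lemma own_signed_invoked tau p y : y \in signed (ST tau p) -> y.2 = p ->
  exists2 tau', tau' < tau & ev tau' = Invoke p y.1.1 y.1.2.
Proof.
elim: tau p y => [//| tau IH] p y.
have old : y \in signed (ST tau p) -> y.2 = p ->
    exists2 tau', tau' < tau.+1 & ev tau' = Invoke p y.1.1 y.1.2.
  by move=> /IH yp /yp [tau' lt Ev]; exists tau' => //; exact: ltnW.
case: (stepP tau) => [E _ | i m sn Ev _ E _ | i tau0 k mm _ cp iC E _];
  rewrite E; first exact: old.
all: rewrite /upd; case: eqP => [pi | _]; [subst p | exact: old].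
  by rewrite /= mem_rcons in_cons => /orP[/eqP-> _ | //]; exists tau.
case: (on_receive_signed t i (ST tau i) mm) => [-> // | [z [-> fresh zsig]]].
rewrite mem_rcons in_cons => /orP[/eqP-> zi | //]; exfalso.
have := received_genuine cp zsig; rewrite /genuine zi => /(_ iC) zs.
by case/hasP: fresh; exists z; rewrite // /same_slot !eqxx.
Qed.

Lemma signed_slot_unique tau p : slot_unique (signed (ST tau p)).
Proof.
elim: tau p => [p y y' // | tau IH] p.
case: (stepP tau) => [E _ | i m sn Ev _ E _ | i tau0 k mm _ cp iC E _];
  rewrite E; first exact: IH.
all: rewrite /upd; case: eqP => _; last exact: IH.
  apply: slot_unique_rcons (IH i) _; apply/hasPn => y ys.
  apply/negP; rewrite /same_slot /= => /andP[/eqP sny /eqP yi].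
  case: (own_signed_invoked ys yi) => tau' lt; rewrite sny => Ev'.
  case: valid => _ _ /(_ _ _ _ _ Ev) [_ /(_ _ _ Ev') eq_tau] _ _.
  by rewrite eq_tau ltnn in lt.
case: (on_receive_signed t i (ST tau i) mm) => [-> | [z [-> fresh _]]].
  exact: IH.
exact: slot_unique_rcons.
Qed.

Lemma quorum_agreement T1 T2 p1 p2 x x' : same_slot x.1.2 x.2 x' ->
  quorum t (saved (ST T1 p1)) x -> quorum t (saved (ST T2 p2)) x' -> x = x'.
Proof.
move=> slot q1 q2.
have byz : #|~: C| <= t by case: valid => -[].
have quorum_signers T p y : quorum t (saved (ST T p)) y ->
    #|'I_n| + t < #|[set k | (k, y) \in saved (ST T p)]| * 2.
  by rewrite card_ord card_signers ?saved_uniq.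
have [k] := quorums_meet byz (quorum_signers _ _ _ q1) (quorum_signers _ _ _ q2).
rewrite !inE => /andP[s1 s2] kC.
have signed_max T y : T <= maxn T1 T2 -> y \in signed (ST T k) ->
    y \in signed (ST (maxn T1 T2) k).
  by move=> le; case: (stateAt_le k le) => _ + _; apply.
apply: (@signed_slot_unique (maxn T1 T2) k _ _ _ _ slot).
- exact: signed_max (leq_maxl _ _) (saved_genuine s1 kC).
- exact: signed_max (leq_maxr _ _) (saved_genuine s2 kC).
Qed.

Lemma bundle_delivery tau1 tau2 p q x k :
  quorum t (saved (ST tau1.+1 p)) x -> (x.2, x) \in saved (ST tau1.+1 p) ->
  onth (outs tau1) k = Some (bundle x (saved (ST tau1.+1 p))) ->
  ev tau2 = Recv M q tau1 k -> x \in delivered (ST tau2.+1 q).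
Proof.
move=> qx src sent recv.
have [qC lt _ _] := let: And5 _ _ _ recvs _ := valid in recvs _ _ _ _ recv.
have cp := copy_msg_sent q lt sent.
rewrite (stateAt_recv recv cp qC).
have [/hasP[y dy slot] | nodel] :=
  boolP (has (same_slot x.1.2 x.2) (delivered (ST tau2 q))).
  rewrite (quorum_agreement slot qx (delivered_quorum dy)).
  exact: on_receive_delivered_subset.
exact: on_receive_quorum_bundle (saved_uniq _ _) src qx nodel.
Qed.

End ValidExecution.
End Execution.

Theorem mainTheorem6 (M : eqType) (n t d : nat) (C : {set 'I_n})
  (ev : nat -> event M n) :
  3 * t + 2 * d < n ->
  valid_exec t C ev d ->
  forall (i j : 'I_n) (m : M) (sn : nat),
    i \in C -> mbrb_delivers t C ev i (m, sn, j) ->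
    exists L : {set 'I_n},
      [/\ L \subset C, #|C| - d <= #|L| &
          forall k, k \in L -> mbrb_delivers t C ev k (m, sn, j)].
Proof.
move=> _ valid i j m sn _ [tau delivered_tau].
pose P tau := (m, sn, j) \in delivered (stateAt t C ev tau i).
have [tau1 [fresh delivered1]] := exists_switch_on (P := P) isT delivered_tau.
have [qx src [k sent]] := delivery_broadcast fresh delivered1.
have [D [cardD recv]] : exists D : {set 'I_n}, #|D| <= d /\
    forall q, q \in C -> q \notin D -> exists tau2, ev tau2 = Recv M q tau1 k.
  by case: valid => _ _ _ _; apply; rewrite -onthTE sent.
exists (C :\: D); split; first exact: subsetDl.
  by rewrite cardsD; have := subset_leq_card (subsetIr C D); lia.
move=> q /setDP[qC qD]; have [tau2 recv_q] := recv q qC qD.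
by exists tau2.+1; exact: (bundle_delivery valid qx src sent recv_q).
Qed.
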